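(* Let $q\ge 7$ and $s\in[1,7]$ be integers, $C$ a finite set with $|C|=2q+s$, and $M\in\mathcal M(6,q,C)$. Then: (1) $c_1=0$; (2) $c_l=0$ for all $l\ge 7$; (3) $c_2\ge 3s$; (4) $c_{3+}\le 2q-2s$; (5) $\sum_{i=3}^6 i\,c_i\le 6q-6s$; (6) $\operatorname{frq}(M)=2$; (7) $\operatorname{exc}(M)=7-s$; (8) $c_{4+}\le c_2-3s$; (9) for every two-element set $\{i,k\}\subseteq\{1,\dots,6\}$, $r(i,k)\le 8-s$.
   Context: $\mathcal M(6,q,C)$ is the set of $6\times q$ matrices $M$ with entries from $C$ such that each row has $q$ pairwise distinct entries, each column has $6$ pairwise distinct entries, and every pair of distinct colours of $C$ appears together in some row or some column of $M$. The frequency of a colour is the number of entries of $M$ equal to it; $\operatorname{frq}(M)$ is the minimum frequency over $C$. $C_l$ is the set of colours of frequency $l$, $c_l=|C_l|$; $C_{l+}$ is the set of colours of frequency at least $l$, $c_{l+}=|C_{l+}|$. The excess of a colour $\gamma$ of frequency $l$ is $\operatorname{exc}(\gamma)=l(6+q-l-1)-(|C|-1)$, and $\operatorname{exc}(M)$ is the minimum excess over $C$. For rows $i\ne k$, $r(i,k)$ is the number of colours of frequency $2$ appearing in both row $i$ and row $k$. *)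

From mathcomp Require Import all_boot all_order all_algebra.
Set Implicit Arguments. Unset Strict Implicit. Unset Printing Implicit Defensive.
Import Order.TTheory GRing.Theory Num.Theory.
Local Open Scope ring_scope.

Definition inM (q : nat) (C : finType) (M : 'M[C]_(6, q)) : Prop :=
  (forall (i : 'I_6) (j1 j2 : 'I_q), M i j1 = M i j2 -> j1 = j2) /\
  (forall (j : 'I_q) (i1 i2 : 'I_6), M i1 j = M i2 j -> i1 = i2) /\
  (forall a b : C, a <> b ->
     (exists (i : 'I_6) (j1 j2 : 'I_q), M i j1 = a /\ M i j2 = b) \/
     (exists (j : 'I_q) (i1 i2 : 'I_6), M i1 j = a /\ M i2 j = b)).

Definition freq (q : nat) (C : finType) (M : 'M[C]_(6, q)) (a : C) : nat := (
  #|[set p : 'I_6 * 'I_q | M p.1 p.2 == a]|)%N.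

Definition cnt (q : nat) (C : finType) (M : 'M[C]_(6, q)) (l : nat) : nat := (
  #|[set a : C | freq M a == l]|)%N.
Definition cnt_ge (q : nat) (C : finType) (M : 'M[C]_(6, q)) (l : nat) : nat := (
  #|[set a : C | (l <= freq M a)%N]|)%N.

Definition exc (q : nat) (C : finType) (M : 'M[C]_(6, q)) (a : C) : int :=
  ((freq M a)%:Z * (6%:Z + q%:Z - (freq M a)%:Z - 1) - (#|C|%:Z - 1))%R.

Definition minimum_of (T : finType) (f : T -> int) (m : int) : Prop :=
  (exists a, f a = m) /\ (forall a, m <= f a).

Definition frq_is (q : nat) (C : finType) (M : 'M[C]_(6, q)) (m : nat) : Prop :=
  minimum_of (fun a => (freq M a)%:Z) m%:Z.
Definition exc_is (q : nat) (C : finType) (M : 'M[C]_(6, q)) (m : int) : Prop :=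
  minimum_of (exc M) m.

Definition in_row (q : nat) (C : finType) (M : 'M[C]_(6, q)) (i : 'I_6) (a : C) : bool :=
  [exists j : 'I_q, M i j == a].

Definition rr (q : nat) (C : finType) (M : 'M[C]_(6, q)) (i k : 'I_6) : nat := (
  #|[set a : C | [&& (freq M a == 2)%N, in_row M i a & in_row M k a]]|)%N.

From mathcomp Require Import all_boot all_order all_algebra.
From mathcomp Require Import zify ring.

Set Implicit Arguments.
Unset Strict Implicit.
Unset Printing Implicit Defensive.

Import Num.Theory.

(* A colour a of frequency l meets l rows and l columns; every other colour
   shares a row or a column with a, hence is seen in the cross formed by these
   lines, which has l(q+5-l) cells besides those of a.  So exc(a) >= 0, and
   exc(a) even bounds the number of cross cells that can be discarded while
   every colour stays visible: a colour sharing two rows with a is seen twice.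
   For |C| = 2q+s this excludes frequencies 0 and 1, gives the colours of
   frequency 2 the least excess 7-s, and bounds r(i,k) by 8-s.  The remaining
   claims are linear consequences of c_2 + ... + c_6 = |C| and
   2c_2 + ... + 6c_6 = 6q. *)

Lemma card_set_sum (T : finType) (P : pred T) : #|[set x | P x]| = \sum_x P x.
Proof. by rewrite -sum1dep_card big_mkcond; apply: eq_bigr => x _; case: (P x). Qed.

Section Counting.
Variables (q : nat) (C : finType) (M : 'M[C]_(6, q)).

Lemma sum_freq : \sum_a freq M a = 6 * q.
Proof.
rewrite /freq; under eq_bigr => a _ do rewrite card_set_sum.
have -> : 6 * q = #|{: 'I_6 * 'I_q}| by rewrite card_prod !card_ord.
rewrite exchange_big /= -sum1_card.
apply: eq_bigr => p _; rewrite (bigD1 (M p.1 p.2)) //= eqxx big1 // => b.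
by rewrite eq_sym => /negPf ->.
Qed.

Lemma cnt_eq0 l : (forall a, freq M a != l) -> cnt M l = 0.
Proof. by move=> Hl; apply: eq_card0 => a; rewrite inE (negPf (Hl a)). Qed.

Lemma sum_cnt_freq n (w : nat -> nat) : (forall a, freq M a < n) ->
  \sum_(l < n) w l * cnt M l = \sum_a w (freq M a).
Proof.
move=> Hn.
rewrite (eq_bigr (fun l : 'I_n => \sum_a w l * (freq M a == l))) => [|l _]; last first.
  by rewrite /cnt card_set_sum big_distrr.
rewrite exchange_big /=; apply: eq_bigr => a _.
rewrite (bigD1 (Ordinal (Hn a))) //= eqxx muln1 big1 ?addn0 // => l.
by rewrite -val_eqE /= eq_sym => /negPf ->; rewrite muln0.
Qed.

Lemma cnt_ge_sum n k : (forall a, freq M a < n) ->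
  cnt_ge M k = \sum_(l < n) (k <= l) * cnt M l.
Proof. by move=> Hn; rewrite (sum_cnt_freq (leq k) Hn) /cnt_ge card_set_sum. Qed.

Section FrequencyRange.
Hypothesis freq_range : forall a, 2 <= freq M a <= 6.

Let freq_lt7 a : freq M a < 7. Proof. by case/andP: (freq_range a). Qed.

Lemma cnt_out l : (l < 2) || (6 < l) -> cnt M l = 0.
Proof.
move=> l_out; apply: cnt_eq0 => a; apply: contraTneq l_out => <-.
by rewrite negb_or -!leqNgt.
Qed.

Let sum_cnt_range (w : nat -> nat) :
  \sum_(l < 7) w l * cnt M l = w 2 * cnt M 2 + w 3 * cnt M 3 + w 4 * cnt M 4 +
                                 w 5 * cnt M 5 + w 6 * cnt M 6.
Proof. by rewrite !big_ord_recr big_ord0 /= (@cnt_out 0) // (@cnt_out 1) // !muln0. Qed.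

Lemma card_cnt : #|C| = cnt M 2 + cnt M 3 + cnt M 4 + cnt M 5 + cnt M 6.
Proof.
have := sum_cnt_freq (fun=> 1) freq_lt7; rewrite (sum_cnt_range (fun=> 1)) sum1_card.
by rewrite !mul1n.
Qed.

Lemma six_q_cnt :
  6 * q = 2 * cnt M 2 + 3 * cnt M 3 + 4 * cnt M 4 + 5 * cnt M 5 + 6 * cnt M 6.
Proof. by rewrite -sum_freq -(sum_cnt_freq id freq_lt7) (sum_cnt_range id). Qed.

Lemma cnt_ge3E : cnt_ge M 3 = cnt M 3 + cnt M 4 + cnt M 5 + cnt M 6.
Proof. by rewrite (cnt_ge_sum 3 freq_lt7) (sum_cnt_range (leq 3)) !mul1n. Qed.

Lemma cnt_ge4E : cnt_ge M 4 = cnt M 4 + cnt M 5 + cnt M 6.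
Proof. by rewrite (cnt_ge_sum 4 freq_lt7) (sum_cnt_range (leq 4)) !mul1n. Qed.

End FrequencyRange.

End Counting.

Lemma grid_cross_size m n l : l <= m -> l <= n ->
  m * n - (m - l) * (n - l) - l = l * (m + n - l - 1).
Proof. by nia. Qed.

Section Cross.
Variables (q : nat) (C : finType) (M : 'M[C]_(6, q)).

Definition occ (a : C) := [set p : 'I_6 * 'I_q | M p.1 p.2 == a].
Definition rows_of (a : C) := [set p.1 | p in occ a].
Definition cols_of (a : C) := [set p.2 | p in occ a].
Definition cross (a : C) := ~: setX (~: rows_of a) (~: cols_of a).

Lemma card_occ a : #|occ a| = freq M a.
Proof. by []. Qed.

Lemma mem_rows_of a i j : M i j = a -> i \in rows_of a.
Proof. by move=> Ma; apply/imsetP; exists (i, j); rewrite // inE Ma. Qed.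

Lemma mem_cols_of a i j : M i j = a -> j \in cols_of a.
Proof. by move=> Ma; apply/imsetP; exists (i, j); rewrite // inE Ma. Qed.

Lemma in_row_rows_of a i : in_row M i a -> i \in rows_of a.
Proof. by case/existsP=> j /eqP; apply: mem_rows_of. Qed.

Hypothesis HM : inM M.

Let row_inj : forall i j1 j2, M i j1 = M i j2 -> j1 = j2 := proj1 HM.
Let col_inj : forall j i1 i2, M i1 j = M i2 j -> i1 = i2 := proj1 (proj2 HM).
Let pair_seen : forall a b, a <> b ->
    (exists i j1 j2, M i j1 = a /\ M i j2 = b) \/
    (exists j i1 i2, M i1 j = a /\ M i2 j = b) := proj2 (proj2 HM).

Lemma card_rows_of a : #|rows_of a| = freq M a.
Proof.
apply: card_in_imset => -[i j1] [i' j2]; rewrite !inE /= => /eqP M1 /eqP M2 ii'.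
by subst i'; rewrite (row_inj (etrans M1 (esym M2))).
Qed.

Lemma card_cols_of a : #|cols_of a| = freq M a.
Proof.
apply: card_in_imset => -[i1 j] [i2 j']; rewrite !inE /= => /eqP M1 /eqP M2 jj'.
by subst j'; rewrite (col_inj (etrans M1 (esym M2))).
Qed.

Lemma freq_le6 a : freq M a <= 6.
Proof. by rewrite -card_rows_of; apply: leq_trans (max_card _) _; rewrite card_ord. Qed.

Lemma freq_leq a : freq M a <= q.
Proof. by rewrite -card_cols_of; apply: leq_trans (max_card _) _; rewrite card_ord. Qed.

Lemma card_cross_occ a :
  #|cross a :\: occ a| = freq M a * (6 + q - freq M a - 1).
Proof.
have occ_cross : occ a \subset cross a.
  by apply/subsetP=> -[i j]; rewrite !inE /= => /eqP /mem_rows_of ->.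
rewrite cardsDS // cardsCs setCK cardsX card_prod !card_ord card_occ.
rewrite [#|~: rows_of a|]cardsCs [#|~: cols_of a|]cardsCs !setCK !card_ord.
rewrite card_rows_of card_cols_of.
exact: grid_cross_size (freq_le6 a) (freq_leq a).
Qed.

Lemma cross_cover a :
  [set~ a] \subset [set M p.1 p.2 | p in cross a :\: occ a].
Proof.
apply/subsetP=> b; rewrite !inE => ba; apply/imsetP.
have ab : a <> b by move=> E; rewrite E eqxx in ba.
case: (pair_seen ab) => [[i [j1 [j2 [Ma Mb]]]] | [j [i1 [i2 [Ma Mb]]]]].
- by exists (i, j2); rewrite // !inE /= (mem_rows_of Ma) Mb ba.
- by exists (i2, j); rewrite // !inE /= (mem_cols_of Ma) Mb ba andbF.
Qed.

Lemma exc_ge_card a (T : {set 'I_6 * 'I_q}) :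
  T \subset cross a :\: occ a ->
  [set~ a] \subset [set M p.1 p.2 | p in (cross a :\: occ a) :\: T] ->
  (#|T|%:Z <= exc M a)%R.
Proof.
move=> sub_T cover_T.
have C_gt0 : 0 < #|C| by apply/card_gt0P; exists a.
have := leq_trans (subset_leq_card cover_T) (leq_imset_card _ _).
rewrite cardsC1 -subn1 cardsDS // card_cross_occ => le_C.
have le_T : #|T| <= #|cross a :\: occ a| := subset_leq_card sub_T.
rewrite card_cross_occ in le_T.
have := freq_leq a; rewrite /exc; move: (freq M a) le_C le_T => l le_C le_T lq.
have -> : (6%:Z + q%:Z - l%:Z - 1)%R = (6 + q - l - 1)%N by lia.
rewrite -PoszM; move: (l * _) #|T| le_C le_T => m t le_C le_T; lia.
Qed.

Lemma exc_ge0 a : (0 <= exc M a)%R.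
Proof.
have := @exc_ge_card a set0; rewrite cards0 sub0set setD0; apply=> //.
exact: cross_cover.
Qed.

Lemma exc_ge_shared i k a (D : {set C}) :
  i != k -> in_row M i a -> in_row M k a ->
  {subset D <= [pred d | [&& d != a, in_row M i d & in_row M k d]]} ->
  (#|D|%:Z <= exc M a)%R.
Proof.
move=> ik /in_row_rows_of ia /in_row_rows_of ka sub_D.
pose T := [set p : 'I_6 * 'I_q | (p.1 == k) && (M p.1 p.2 \in D)].
have D_T : D = [set M p.1 p.2 | p in T].
  apply/setP=> d; apply/idP/imsetP=> [Dd | [p]]; last by rewrite inE => /andP[_ Dp] ->.
  have /and3P[_ _ /existsP[j /eqP Mkj]] := sub_D d Dd.
  by exists (k, j); rewrite // inE /= eqxx Mkj.
have card_T : #|T| = #|D|.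
  rewrite D_T card_in_imset // => -[k1 j1] [k2 j2].
  by rewrite !inE /= => /andP[/eqP-> _] /andP[/eqP-> _] /row_inj->.
(* The cells of T are discardable: their colours are also seen in row i. *)
rewrite -card_T; apply: exc_ge_card.
  apply/subsetP=> -[k' j]; rewrite !inE /= => /andP[/eqP-> /sub_D /andP[da _]].
  by rewrite ka da.
apply/subsetP=> b ba; have /imsetP[p Sp ->] := subsetP (cross_cover a) b ba.
apply/imsetP; have [Tp | nTp] := boolP (p \in T); last by exists p; rewrite // inE nTp.
have /sub_D/and3P[pa /existsP[j /eqP Mij] _] : M p.1 p.2 \in D.
  by move: Tp; rewrite inE => /andP[].
by exists (i, j); rewrite // !inE /= Mij pa ia (negPf ik).
Qed.

Lemma exc_freq2 a : freq M a = 2 -> exc M a = ((2 * q + 7)%:Z - #|C|%:Z)%R.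
Proof. by rewrite /exc => ->; lia. Qed.

Lemma exc_freq2_le a : 2 <= freq M a -> ((2 * q + 7)%:Z - #|C|%:Z <= exc M a)%R.
Proof.
have := freq_leq a; rewrite /exc; move: (freq M a) => l lq l2.
have -> : (l%:Z * (6%:Z + q%:Z - l%:Z - 1) =
           2 * (q%:Z + 3) + (l%:Z - 2) * (q%:Z + 3 - l%:Z))%R by ring.
have : (0 <= (l%:Z - 2) * (q%:Z + 3 - l%:Z))%R by apply: mulr_ge0; lia.
move: (_ * _)%R => x; lia.
Qed.

Lemma freq_ge2 a : q + 5 < #|C| -> 2 <= freq M a.
Proof.
move=> Cbig; have := exc_ge0 a; rewrite /exc.
by case: (freq M a) => [|[|l]]; lia.
Qed.

Lemma rr_le i k : i != k -> rr M i k <= 2 * q + 8 - #|C|.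
Proof.
move=> ik; rewrite /rr; set R := [set a | _].
have [-> | /set0Pn[a Ra]] := eqVneq R set0; first by rewrite cards0.
move: (Ra); rewrite inE => /and3P[/eqP a2 ia ka].
have shared : {subset R :\ a <= [pred d | [&& d != a, in_row M i d & in_row M k d]]}.
  by move=> d; rewrite !inE => /andP[-> /and3P[_ -> ->]].
have := exc_ge_shared ik ia ka shared; rewrite exc_freq2 // (cardsD1 a R) Ra.
move: #|R :\ a| => r; lia.
Qed.

End Cross.

Theorem claim1 (q s : nat) (C : finType) (M : 'M[C]_(6, q)) :
  7 <= q -> 1 <= s <= 7 -> #|C| = 2 * q + s -> inM M ->
  cnt M 1 = 0 /\
      (forall l, 7 <= l -> cnt M l = 0) /\
      3 * s <= cnt M 2 /\
      cnt_ge M 3 <= 2 * q - 2 * s /\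
      \sum_(3 <= i < 7) i * cnt M i <= 6 * q - 6 * s /\
      frq_is M 2 /\
      exc_is M (7%:Z - s%:Z)%R /\
      cnt_ge M 4 + 3 * s <= cnt M 2 /\
    (forall i k : 'I_6, i != k -> rr M i k <= 8 - s).
Proof.
move=> q7 /andP[s1 _] cardC HM.
have freq_range a : 2 <= freq M a <= 6.
  by rewrite freq_le6 // andbT freq_ge2 // cardC; lia.
have := card_cnt freq_range; have := six_q_cnt freq_range.
have := cnt_ge3E freq_range; have := cnt_ge4E freq_range.
rewrite cardC => ge4 ge3 six_q card_C.
have c2 : 3 * s <= cnt M 2 by lia.
have [a2 fa2] : exists a, freq M a = 2.
  have /card_gt0P[a] : 0 < cnt M 2 by lia.
  by rewrite inE => /eqP; exists a.
split; first by rewrite (cnt_out freq_range).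
split; first by move=> l l7; apply: (cnt_out freq_range); rewrite l7 orbT.
split; first exact: c2.
split; first lia.
split; first by do 4 rewrite big_ltn //; rewrite big_geq //; lia.
split.
  split; first by exists a2; rewrite fa2.
  by move=> a; rewrite lez_nat; case/andP: (freq_range a).
split.
  split; first by exists a2; rewrite exc_freq2 // cardC; lia.
  by move=> a; case/andP: (freq_range a) => /(exc_freq2_le HM); rewrite cardC; lia.
split; first lia.
by move=> i k ik; have := rr_le HM ik; rewrite cardC; lia.
Qed.
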